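(* Let $A$ be either quadratic or cubic (as in the context), let $(a_i),(b_i)$ be finitely supported integer sequences, neither identically zero, and $q_i=a_i-b_i$. The following are equivalent. (1) With $q_\mu$ the lowest-index and $q_\nu$ the highest-index nonzero $q_i$: (a) $a_l=0$ for $l<\mu$ and $l\ge\nu$; (b) $a_\mu=q_\mu>0$; (c) $\sum_iq_i=0$; (d) $\max(q_l,0)\le a_l<\sum_{i\le l}q_i$ for $\mu<l<\nu$; (e) if $A$ is cubic, it is not true that ($a_\mu\ge2$ and $\mu=\nu-1$). (2) With $a_\mu$ the lowest-index nonzero $a_i$ and $b_\nu$ the highest-index nonzero $b_i$, and $n=\sum_ib_i$: (a) all $a_i,b_i\ge0$; (b) $a_l=0$ for $l\ge\nu$, $b_l=0$ for $l\le\mu$; (c) $\sum_ia_i=\sum_ib_i$; (d) $\sum_{i\le l}b_i<\sum_{i<l}a_i$ for $\mu<l<\nu$; (e) if $A$ is cubic, it is not true that ($n\ge2$ and $\mu=\nu-1$). (3) With $m=\sum a_i$, $n=\sum b_i$: (a) all $a_i,b_i\ge0$; (b) $m=n$; (c) for all $1\le\alpha\le m$, $1\le\beta\le n$ with $\beta\ge\alpha-1$, $S(a)_\alpha<S(b)_\beta$; (d) if $A$ is cubic, it is not true that ($n\ge2$ and $S(b)_\beta-S(a)_\alpha=1$ for all $\alpha,\beta$).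
   Context: $A$ is a generic three-dimensional Artin–Schelter regular algebra generated in degree one, of ''quadratic'' type (three generators, three quadratic relations) or ''cubic'' type (two generators, two cubic relations); only this dichotomy matters here. For a finitely supported sequence $(c_i)$ of non-negative integers, $S(c)$ is the nondecreasing sequence of length $\sum_ic_i$, indexed from $1$, in which each integer $i$ appears exactly $c_i$ times. *)

From mathcomp Require Import all_boot all_order all_algebra.
Set Implicit Arguments. Unset Strict Implicit. Unset Printing Implicit Defensive.
Import Order.TTheory GRing.Theory Num.Theory.
Local Open Scope ring_scope.

(* The only relevant datum about the AS-regular algebra A: its type. *)
Inductive AStype := Quadratic | Cubic.

(* Finitely supported integer sequences are functions int -> int that vanish
   outside the window [-N, N]; the window bound N is an explicit parameter. *)
Definition zidx (N k : nat) : int := k%:Z - N%:Z.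

(* sum over all integers (= over the window [-N,N]) *)
Definition zsum (N : nat) (f : int -> int) : int :=
  \sum_(0 <= k < (N + N).+1) f (zidx N k).

Definition zsum_le (N : nat) (f : int -> int) (l : int) : int :=
  \sum_(0 <= k < (N + N).+1 | zidx N k <= l) f (zidx N k).

Definition zsum_lt (N : nat) (f : int -> int) (l : int) : int :=
  \sum_(0 <= k < (N + N).+1 | zidx N k < l) f (zidx N k).

(* S(c): nondecreasing sequence in which each integer i appears c_i times
   (c is assumed nonnegative wherever S is used; absz is then the identity). *)
Definition Sseq (N : nat) (c : int -> int) : seq int :=
  flatten [seq nseq `|c (zidx N k)|%N (zidx N k) | k <- iota 0 (N + N).+1].

(* S(c)_alpha, indexed from 1 *)
Definition Sat (N : nat) (c : int -> int) (alpha : nat) : int :=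
  nth 0 (Sseq N c) alpha.-1.

Definition lowest (f : int -> int) (mu : int) : Prop :=
  f mu != 0 /\ forall i, i < mu -> f i = 0.
Definition highest (f : int -> int) (nu : int) : Prop :=
  f nu != 0 /\ forall i, nu < i -> f i = 0.

Definition cond1 (A : AStype) (N : nat) (a b : int -> int) : Prop :=
  let q := fun i => a i - b i in
  exists mu nu : int, lowest q mu /\ highest q nu /\
  [/\ (forall l, (l < mu) || (nu <= l) -> a l = 0),
      a mu = q mu /\ 0 < q mu,
      zsum N q = 0,
      (forall l, mu < l < nu ->
          Num.max (q l) 0 <= a l /\ a l < zsum_le N q l) &
      (A = Cubic -> ~ ((2 <= a mu) /\ mu = nu - 1))].

Definition cond2 (A : AStype) (N : nat) (a b : int -> int) : Prop :=
  let n := zsum N b in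
  exists mu nu : int, lowest a mu /\ highest b nu /\
  [/\ (forall i, 0 <= a i /\ 0 <= b i),
      (forall l, nu <= l -> a l = 0) /\ (forall l, l <= mu -> b l = 0),
      zsum N a = zsum N b,
      (forall l, mu < l < nu -> zsum_le N b l < zsum_lt N a l) &
      (A = Cubic -> ~ ((2 <= n) /\ mu = nu - 1))].

Definition cond3 (A : AStype) (N : nat) (a b : int -> int) : Prop :=
  let m := zsum N a in
  let n := zsum N b in
  [/\ (forall i, 0 <= a i /\ 0 <= b i),
      m = n,
      (forall alpha beta : nat,
          (1 <= alpha)%N -> alpha%:Z <= m -> (1 <= beta)%N -> beta%:Z <= n ->
          (alpha <= beta.+1)%N -> Sat N a alpha < Sat N b beta) &
      (A = Cubic -> ~ ((2 <= n) /\
          (forall alpha beta : nat,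
             (1 <= alpha)%N -> alpha%:Z <= m -> (1 <= beta)%N -> beta%:Z <= n ->
             Sat N b beta - Sat N a alpha = 1)))].

(* Write A(l), B(l) for the partial sums of a and b over i <= l. For c >= 0 the
   sequence S(c) and the partial sums C of c form a Galois connection:
   S(c)_alpha <= l iff alpha <= C(l); in particular S(c)_1 and S(c)_(sum c) are
   the lowest and highest points of the support of c.  All three conditions are
   equivalent to the following normal form of (2): a, b >= 0 with equal sums,
   a supported in [mu, nu) with a_mu > 0, b supported in (mu, nu] with b_nu > 0,
   B(l) < A(l-1) for mu < l < nu, and the cubic exception.
   For (1), the partial sums of q are A - B, so a_l < sum_(i<=l) q_i reads
   B(l) < A(l-1), and b_nu = sum_(i<nu) q_i is positive by (1)(d) at nu - 1.
   For (3), the Galois connection turns the inequalities S(a)_alpha < S(b)_beta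
   into the interlacing of A and B, and the cubic exceptions agree because
   mu = S(a)_1 and nu = S(b)_n. *)

From mathcomp Require Import all_boot all_order all_algebra.
From mathcomp Require Import zify.
Import Order.TTheory GRing.Theory Num.Theory.
Set Implicit Arguments.
Unset Strict Implicit.
Unset Printing Implicit Defensive.

Local Open Scope ring_scope.

Section PartialSums.

Variable N : nat.
Context {c : int -> int}.

Lemma zsum_ltE l : zsum_lt N c l = zsum_le N c (l - 1).
Proof. by apply: eq_bigl => k; apply/idP/idP; lia. Qed.

Lemma zsum_le_eq0 l : (forall i, i <= l -> c i = 0) -> zsum_le N c l = 0.
Proof. by move=> c0; apply: big1 => k /c0. Qed.

Lemma zsum_le_eq_zsum l : (forall i, l < i -> c i = 0) -> zsum_le N c l = zsum N c.
Proof.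
move=> c0; rewrite /zsum (bigID (fun k => zidx N k <= l)) /= [X in _ + X]big1 ?addr0 //.
by move=> k; rewrite -ltNge; apply: c0.
Qed.

Hypothesis c_supp : forall i, N%:Z < `|i| -> c i = 0.

Lemma zsum_le_recr l : zsum_le N c l = zsum_le N c (l - 1) + c l.
Proof.
rewrite /zsum_le (bigID (fun k => zidx N k == l)) /= addrC; congr (_ + _).
  by apply: eq_bigl => k; rewrite /zidx; apply/idP/idP; lia.
have [l_in | l_out] := boolP (`|l| <= N%:Z); last first.
  have cl0 : c l = 0 by apply: c_supp; rewrite ltNge.
  by rewrite cl0 big1 // => k /andP [_ /eqP ->].
rewrite (eq_bigl (fun k => k == absz (l + N%:Z))); last first.
  by move=> k /=; rewrite /zidx; apply/idP/idP => [/andP [_ /eqP] | /eqP]; lia.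
by rewrite big_nat1_eq ifT /zidx; [congr c | ]; lia.
Qed.

Hypothesis c_ge0 : forall i, 0 <= c i.

Lemma zsum_le_ge0 l : 0 <= zsum_le N c l.
Proof. exact: sumr_ge0. Qed.

Lemma zsum_le_le_zsum l : zsum_le N c l <= zsum N c.
Proof. by rewrite /zsum (bigID (fun k => zidx N k <= l)) /= lerDl sumr_ge0. Qed.

Lemma zsum_le_homo : {homo zsum_le N c : j l / j <= l}.
Proof.
move=> j l jl; rewrite /zsum_le (bigID (fun k => zidx N k <= j) (fun k => zidx N k <= l)) /=.
rewrite [X in _ <= X + _](eq_bigl (fun k => zidx N k <= j)) ?lerDl ?sumr_ge0 //.
by move=> k /=; rewrite andb_idl // => kj; apply: le_trans jl.
Qed.

Lemma zsum_gt0 i : c i != 0 -> 0 < zsum N c.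
Proof.
move=> ci; have := zsum_le_recr i; have := zsum_le_le_zsum i.
have := zsum_le_ge0 (i - 1); have := c_ge0 i; lia.
Qed.

End PartialSums.

Lemma nth_flatten_nseq_le d (T : orderType d) (x0 : T) (w : T -> nat) (s : seq T) k l :
  sorted <=%O s -> (k < \sum_(x <- s) w x)%N ->
  (nth x0 (flatten [seq nseq (w x) x | x <- s]) k <= l)%O =
  (k < \sum_(x <- s | (x <= l)%O) w x)%N.
Proof.
elim: s k => [|x s IH] k /=; first by rewrite big_nil.
move=> s_sorted; rewrite !big_cons nth_cat size_nseq => k_lt.
have /allP x_min := order_path_min le_trans s_sorted.
have tail0 : (l < x)%O -> (\sum_(y <- s | (y <= l)%O) w y = 0)%N.
  move=> lx; rewrite big1_seq // => y /andP [yl ys].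
  by have := lt_le_trans lx (x_min y ys); rewrite ltNge yl.
case: ifP => k_in_x.
  by rewrite nth_nseq k_in_x; case: leP => [_ | /tail0 ->]; rewrite ?ltn_addr.
rewrite IH; [| exact: path_sorted s_sorted | lia].
by case: leP => [_ | /tail0 ->]; apply/idP/idP; lia.
Qed.

Section SortedSequence.

Variable N : nat.
Context {c : int -> int}.
Hypotheses (c_supp : forall i, N%:Z < `|i| -> c i = 0) (c_ge0 : forall i, 0 <= c i).

Lemma Sat_leE l {alpha : nat} : (1 <= alpha)%N -> alpha%:Z <= zsum N c ->
  (Sat N c alpha <= l) = (alpha%:Z <= zsum_le N c l).
Proof.
have sumE P : \sum_(0 <= k < (N + N).+1 | P (zidx N k)) c (zidx N k) =
    (\sum_(x <- map (zidx N) (iota 0 (N + N).+1) | P x) `|c x|%N)%:Z.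
  rewrite big_map (big_morph Posz PoszD (erefl _)).
  by apply: eq_bigr => k _; rewrite gez0_abs.
have sorted_idx : sorted <=%O (map (zidx N) (iota 0 (N + N).+1)).
  by rewrite sorted_map; apply: sub_sorted (iota_sorted 0 _) => i j /= ij; rewrite /zidx; lia.
have totalE : zsum N c = (\sum_(x <- map (zidx N) (iota 0 (N + N).+1)) `|c x|%N)%:Z.
  exact: sumE predT.
rewrite /zsum_le (sumE (fun x => x <= l)) totalE !lez_nat /Sat => alpha_ge1 alpha_le.
have -> : Sseq N c = flatten [seq nseq `|c x|%N x | x <- map (zidx N) (iota 0 (N + N).+1)].
  by rewrite /Sseq -map_comp.
by case: alpha alpha_ge1 alpha_le => // alpha _ alpha_le; rewrite nth_flatten_nseq_le.
Qed.

Lemma lowest_Sat1 : 0 < zsum N c -> lowest c (Sat N c 1).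
Proof.
move=> c_pos; have one_le : 1%:Z <= zsum N c by lia.
have F_below i : i < Sat N c 1 -> zsum_le N c i = 0.
  rewrite ltNge Sat_leE // => F_lt; have := zsum_le_ge0 N c_ge0 i; lia.
split.
  have : 1 <= zsum_le N c (Sat N c 1) by rewrite -Sat_leE.
  by rewrite (zsum_le_recr c_supp) (F_below (Sat N c 1 - 1)); lia.
move=> i i_lt; have := zsum_le_recr c_supp i; rewrite !F_below //; last lia.
have := c_ge0 i; lia.
Qed.

Lemma highest_Sat_last : 0 < zsum N c -> highest c (Sat N c `|zsum N c|%N).
Proof.
set n := `|zsum N c|%N => c_pos.
have n_ge1 : (1 <= n)%N by lia.
have n_def : n%:Z = zsum N c by lia.
have n_le : n%:Z <= zsum N c by rewrite n_def.
set nu := Sat N c n.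
have F_nu : zsum_le N c nu = zsum N c.
  have := Sat_leE nu n_ge1 n_le; rewrite lexx.
  have := zsum_le_le_zsum N c_ge0 nu; lia.
have F_nu1 : zsum_le N c (nu - 1) < zsum N c.
  by rewrite ltNge -n_def -Sat_leE // -ltNge ltrBlDr ltrDl.
split; first by have := zsum_le_recr c_supp nu; lia.
move=> i i_gt; have := zsum_le_recr c_supp i; have := zsum_le_le_zsum N c_ge0 i.
have /(zsum_le_homo N c_ge0) : nu <= i - 1 by lia.
have := c_ge0 i; lia.
Qed.

End SortedSequence.

Lemma lowest_unique (c : int -> int) mu mu' : lowest c mu -> lowest c mu' -> mu = mu'.
Proof.
move=> [c_mu c_below] [c_mu' c_below'].
case: (ltgtP mu mu') => // [/c_below' | /c_below] c0.
  by move: c_mu; rewrite c0 eqxx.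
by move: c_mu'; rewrite c0 eqxx.
Qed.

Lemma highest_unique (c : int -> int) nu nu' : highest c nu -> highest c nu' -> nu = nu'.
Proof.
move=> [c_nu c_above] [c_nu' c_above'].
case: (ltgtP nu nu') => // [/c_above | /c_above'] c0.
  by move: c_nu'; rewrite c0 eqxx.
by move: c_nu; rewrite c0 eqxx.
Qed.

(* [framed] is (2)(a)-(c) with the witnesses mu, nu of (2), [interlaced] is (2)(d);
   [Sat_separated] is (3)(c) and [Sat_gap1] the exceptional case of (3)(d). *)
Record framed (N : nat) (a b : int -> int) (mu nu : int) : Prop := Framed {
  framed_a_ge0 : forall i, 0 <= a i;
  framed_b_ge0 : forall i, 0 <= b i;
  framed_a_lowest : lowest a mu;
  framed_b_highest : highest b nu;
  framed_a_high : forall l, nu <= l -> a l = 0;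
  framed_b_low : forall l, l <= mu -> b l = 0;
  framed_zsum : zsum N a = zsum N b }.

Definition interlaced (N : nat) (a b : int -> int) (mu nu : int) : Prop :=
  forall l, mu < l < nu -> zsum_le N b l < zsum_lt N a l.

Definition Sat_separated (N : nat) (a b : int -> int) : Prop :=
  forall alpha beta : nat,
    (1 <= alpha)%N -> alpha%:Z <= zsum N a -> (1 <= beta)%N -> beta%:Z <= zsum N b ->
    (alpha <= beta.+1)%N -> Sat N a alpha < Sat N b beta.

Definition Sat_gap1 (N : nat) (a b : int -> int) : Prop :=
  forall alpha beta : nat,
    (1 <= alpha)%N -> alpha%:Z <= zsum N a -> (1 <= beta)%N -> beta%:Z <= zsum N b ->
    Sat N b beta - Sat N a alpha = 1.

Definition framed_cond (A : AStype) (N : nat) (a b : int -> int) : Prop :=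
  exists mu nu, [/\ framed N a b mu nu, interlaced N a b mu nu
                  & A = Cubic -> ~ (2 <= zsum N b /\ mu = nu - 1)].

Lemma cond2E A N a b : cond2 A N a b <-> framed_cond A N a b.
Proof.
split=> [[mu [nu [a_mu [b_nu [ge0 [a_high b_low] sum inter cub]]]]] |
         [mu [nu [fr inter cub]]]].
  by exists mu, nu; split => //; split => // i; case: (ge0 i).
exists mu, nu; split; first exact: framed_a_lowest fr.
split; first exact: framed_b_highest fr.
split => //.
- by move=> i; rewrite (framed_a_ge0 fr) (framed_b_ge0 fr).
- by split; [exact: framed_a_high fr | exact: framed_b_low fr].
- exact: framed_zsum fr.
Qed.

Section Conditions.

Context {N : nat} {a b : int -> int}.
Hypotheses (a_supp : forall i, N%:Z < `|i| -> a i = 0)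
           (b_supp : forall i, N%:Z < `|i| -> b i = 0).

Local Notation q := (fun i => a i - b i).

Lemma zsum_sub : zsum N q = zsum N a - zsum N b.
Proof. exact: sumrB. Qed.

Lemma zsum_le_sub l : zsum_le N q l = zsum_le N a l - zsum_le N b l.
Proof. exact: sumrB. Qed.

Lemma lt_zsum_le_sub l : (a l < zsum_le N q l) = (zsum_le N b l < zsum_lt N a l).
Proof. by rewrite zsum_le_sub (zsum_le_recr a_supp) zsum_ltE; apply/idP/idP; lia. Qed.

Section Framed.

Context {mu nu : int}.
Hypothesis fr : framed N a b mu nu.

Let a_ge0 := framed_a_ge0 fr.
Let b_ge0 := framed_b_ge0 fr.

Lemma framed_zsum_a : mu = nu - 1 -> zsum N a = a mu.
Proof.
move=> mu_nu; have [_ a_below] := framed_a_lowest fr.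
rewrite -(@zsum_le_eq_zsum N a mu) => [|i i_gt]; last by apply: (framed_a_high fr); lia.
by rewrite (zsum_le_recr a_supp) zsum_le_eq0 ?add0r // => i i_le; apply: a_below; lia.
Qed.

Let a_pos : 0 < zsum N a.
Proof. by case: (framed_a_lowest fr) => /(zsum_gt0 a_supp a_ge0). Qed.

Let b_pos : 0 < zsum N b.
Proof. by case: (framed_b_highest fr) => /(zsum_gt0 b_supp b_ge0). Qed.

Lemma framed_Sat1 : Sat N a 1 = mu.
Proof. exact: lowest_unique (lowest_Sat1 a_supp a_ge0 a_pos) (framed_a_lowest fr). Qed.

Lemma framed_Sat_last : Sat N b `|zsum N b|%N = nu.
Proof. exact: highest_unique (highest_Sat_last b_supp b_ge0 b_pos) (framed_b_highest fr). Qed.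

Lemma framed_Sat_a (alpha : nat) : (1 <= alpha)%N -> alpha%:Z <= zsum N a ->
  mu <= Sat N a alpha < nu.
Proof.
move=> alpha_ge1 alpha_le; have [_ a_below] := framed_a_lowest fr.
have A_low : zsum_le N a (mu - 1) = 0.
  by apply: zsum_le_eq0 => i i_le; apply: a_below; lia.
have A_high : zsum_le N a (nu - 1) = zsum N a.
  by apply: zsum_le_eq_zsum => i i_gt; apply: (framed_a_high fr); lia.
have := Sat_leE (N := N) a_ge0 (mu - 1) alpha_ge1 alpha_le.
have := Sat_leE (N := N) a_ge0 (nu - 1) alpha_ge1 alpha_le.
rewrite A_low A_high; lia.
Qed.

Lemma framed_Sat_b (beta : nat) : (1 <= beta)%N -> beta%:Z <= zsum N b ->
  mu < Sat N b beta <= nu.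
Proof.
move=> beta_ge1 beta_le; have [_ b_above] := framed_b_highest fr.
have B_low : zsum_le N b mu = 0 by apply: zsum_le_eq0; exact: (framed_b_low fr).
have B_high : zsum_le N b nu = zsum N b by apply: zsum_le_eq_zsum.
have := Sat_leE (N := N) b_ge0 mu beta_ge1 beta_le.
have := Sat_leE (N := N) b_ge0 nu beta_ge1 beta_le.
rewrite B_low B_high; lia.
Qed.

Lemma framed_interlacedE : interlaced N a b mu nu <-> Sat_separated N a b.
Proof.
split=> [inter alpha beta al1 alm be1 ben al_be | sep l /andP [mu_l l_nu]].
  rewrite ltNge; apply/negP => y_le; set y := Sat N b beta in y_le.
  have /andP [mu_y _] := framed_Sat_b be1 ben.
  have /andP [_ x_nu] := framed_Sat_a al1 alm.
  have := Sat_leE (N := N) b_ge0 y be1 ben; rewrite lexx => /esym B_y.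
  have := Sat_leE (N := N) a_ge0 (y - 1) al1 alm.
  have := inter y (ltac:(apply/andP; split; lia)); rewrite zsum_ltE; lia.
(* With k = A(l-1) <= B(l), the pair (k+1, k) violates separation, unless k = n,
   in which case S(b)_n <= l < nu. *)
rewrite zsum_ltE ltNge; apply/negP => A_le.
have m_n := framed_zsum fr; have n_pos := b_pos.
have A_mu : 1 <= zsum_le N a mu by rewrite -Sat_leE ?framed_Sat1 //; lia.
have A_mono : zsum_le N a mu <= zsum_le N a (l - 1) by apply: (zsum_le_homo N a_ge0); lia.
have A_tot := zsum_le_le_zsum N a_ge0 (l - 1).
set k := `|zsum_le N a (l - 1)|%N.
have [k_n | k_lt] : k%:Z = zsum N b \/ k%:Z < zsum N b by lia.
  have n_ge1 : (1 <= `|zsum N b|)%N by lia.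
  have n_le : `|zsum N b|%N%:Z <= zsum N b by lia.
  by have := Sat_leE (N := N) b_ge0 l n_ge1 n_le; rewrite framed_Sat_last; lia.
have k1_le : k.+1%:Z <= zsum N a by lia.
have k_ge1 : (1 <= k)%N by lia.
have k_le : k%:Z <= zsum N b by lia.
have := sep k.+1 k (ltn0Sn k) k1_le k_ge1 k_le (leqnn _).
have := Sat_leE (N := N) a_ge0 (l - 1) (ltn0Sn k) k1_le.
have := Sat_leE (N := N) b_ge0 l k_ge1 k_le.
lia.
Qed.

Lemma framed_gap1E : mu = nu - 1 <-> Sat_gap1 N a b.
Proof.
split=> [mu_nu alpha beta al1 alm be1 ben | gap].
  have := framed_Sat_a al1 alm; have := framed_Sat_b be1 ben; lia.
have n_pos := b_pos; have m_n := framed_zsum fr.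
have := gap 1%N `|zsum N b|%N (leqnn 1) (ltac:(lia)) (ltac:(lia)) (ltac:(lia)).
by rewrite framed_Sat1 framed_Sat_last; lia.
Qed.

End Framed.

Lemma framed_of_cond1 mu nu :
  lowest q mu -> highest q nu -> (forall l, (l < mu) || (nu <= l) -> a l = 0) ->
  a mu = q mu -> 0 < q mu -> zsum N q = 0 ->
  (forall l, mu < l < nu -> Num.max (q l) 0 <= a l /\ a l < zsum_le N q l) ->
  framed N a b mu nu.
Proof.
have q_supp i : N%:Z < `|i| -> q i = 0 by move=> i_out; rewrite a_supp ?b_supp.
move=> [q_mu q_below] [q_nu q_above] a_out a_mu q_mu_gt0 sum_q mid.
have mu_lt_nu : mu < nu.
  by rewrite ltNge; apply/negP => nu_le; move: q_mu_gt0; rewrite -a_mu a_out ?nu_le ?orbT.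
have b_low l : l <= mu -> b l = 0.
  rewrite le_eqVlt => /predU1P [-> | l_lt]; first by move: a_mu; lia.
  by have := q_below l l_lt; rewrite a_out ?l_lt //; lia.
have b_high l : nu < l -> b l = 0.
  by move=> l_gt; have := q_above l l_gt; rewrite a_out; [lia | apply/orP; right; lia].
have Q_pos : 0 < zsum_le N q (nu - 1).
  have [l_eq | l_gt] : nu - 1 = mu \/ mu < nu - 1 by lia.
    rewrite l_eq (zsum_le_recr q_supp) zsum_le_eq0 ?add0r // => i i_le.
    by apply: q_below; lia.
  by have [] := mid (nu - 1) (ltac:(lia)); rewrite ge_max => /andP []; lia.
have b_nu : b nu = zsum_le N q (nu - 1).
  have : zsum_le N q nu = 0 by rewrite zsum_le_eq_zsum.
  by rewrite (zsum_le_recr q_supp) /= (a_out nu) ?lexx ?orbT //; lia.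
have ge0 i : 0 <= a i /\ 0 <= b i.
  have [i_lt | mu_le] := ltP i mu; first by rewrite a_out ?i_lt // b_low // (ltW i_lt).
  have [nu_le | i_lt] := leP nu i.
    rewrite a_out ?nu_le ?orbT //; split => //.
    by move: nu_le; rewrite le_eqVlt => /predU1P [<- | /b_high ->] //; lia.
  move: mu_le; rewrite le_eqVlt => /predU1P [<- | mu_lt]; first by rewrite b_low //; lia.
  by have [] := mid i (ltac:(lia)); rewrite ge_max => /andP []; lia.
split=> //.
- by move=> i; case: (ge0 i).
- by move=> i; case: (ge0 i).
- split=> [|i i_lt]; first by rewrite a_mu.
  by rewrite a_out ?i_lt.
- split=> [|i /b_high //]; by rewrite b_nu gt_eqF.
- by move=> l nu_le; rewrite a_out ?nu_le ?orbT.
- by apply/eqP; rewrite -subr_eq0 -zsum_sub sum_q.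
Qed.

Lemma framed_of_separated :
  (forall i, 0 <= a i) -> (forall i, 0 <= b i) -> zsum N a = zsum N b ->
  Sat_separated N a b -> 0 < zsum N b ->
  framed N a b (Sat N a 1) (Sat N b `|zsum N b|%N).
Proof.
move=> a_ge0 b_ge0 m_n sep n_pos.
have m_pos : 0 < zsum N a by rewrite m_n.
have n_ge1 : (1 <= `|zsum N b|)%N by lia.
have n_le : `|zsum N b|%N%:Z <= zsum N b by lia.
have n_le_m : `|zsum N b|%N%:Z <= zsum N a by rewrite m_n.
have one_le_m : 1%:Z <= zsum N a by lia.
have one_le_n : 1%:Z <= zsum N b by lia.
have [_ b_below] := lowest_Sat1 b_supp b_ge0 n_pos.
have := highest_Sat_last a_supp a_ge0 m_pos; rewrite m_n => -[_ a_above].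
split=> //; [exact: lowest_Sat1 | exact: highest_Sat_last | |].
- move=> l nu_le; apply: a_above; apply: lt_le_trans nu_le.
  exact: (sep _ _ n_ge1 n_le_m n_ge1 n_le (leqnSn _)).
- move=> l l_le; apply: b_below; apply: le_lt_trans l_le _.
  exact: (sep _ _ (leqnn 1) one_le_m (leqnn 1) one_le_n (leqnSn 1)).
Qed.

Lemma cond1E A : cond1 A N a b <-> framed_cond A N a b.
Proof.
split=> [[mu [nu [q_low [q_high [a_out [a_mu q_pos] sum_q mid cub]]]]] |
         [mu [nu [fr inter cub]]]].
  have fr := framed_of_cond1 q_low q_high a_out a_mu q_pos sum_q mid.
  exists mu, nu; split=> // [l /mid [_] | cubic [n2 mu_nu]]; first by rewrite lt_zsum_le_sub.
  by apply: (cub cubic); rewrite -(framed_zsum_a fr mu_nu) (framed_zsum fr).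
have [a_mu a_below] := framed_a_lowest fr; have [b_nu b_above] := framed_b_highest fr.
have b_low := framed_b_low fr; have a_high := framed_a_high fr.
exists mu, nu; split.
  split=> [|i i_lt]; first by rewrite b_low ?subr0.
  by rewrite a_below // b_low ?subr0 // ltW.
split.
  split=> [|i i_gt]; first by rewrite a_high // sub0r oppr_eq0.
  by rewrite a_high ?b_above ?subr0 // ltW.
split.
- by move=> l /orP [/a_below | /a_high].
- by rewrite b_low ?subr0 // lt_def a_mu (framed_a_ge0 fr).
- by rewrite zsum_sub (framed_zsum fr) subrr.
- move=> l l_mid; split; last by rewrite lt_zsum_le_sub inter.
  by rewrite ge_max (framed_a_ge0 fr) andbT; have := framed_b_ge0 fr l; lia.
- move=> cubic [a2 mu_nu]; apply: (cub cubic); split=> //.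
  by rewrite -(framed_zsum fr) (framed_zsum_a fr mu_nu).
Qed.

Lemma cond3E A : (exists i, b i != 0) -> (cond3 A N a b <-> framed_cond A N a b).
Proof.
move=> [i bi]; split=> [[ge0 m_n sep cub] | [mu [nu [fr inter cub]]]].
  have a_ge0 j : 0 <= a j by case: (ge0 j).
  have b_ge0 j : 0 <= b j by case: (ge0 j).
  have fr := framed_of_separated a_ge0 b_ge0 m_n sep (zsum_gt0 b_supp b_ge0 bi).
  exists (Sat N a 1), (Sat N b `|zsum N b|%N); split=> // [|cubic [n2 mu_nu]].
    exact/(framed_interlacedE fr).
  by apply: (cub cubic); split=> //; apply/(framed_gap1E fr).
split=> [j | | | cubic [n2 gap]]; first by rewrite (framed_a_ge0 fr) (framed_b_ge0 fr).
- exact: framed_zsum fr.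
- exact/(framed_interlacedE fr).
- by apply: (cub cubic); split=> //; apply/(framed_gap1E fr).
Qed.

End Conditions.

Theorem mainTheorem15 (A : AStype) (a b : int -> int) (N : nat)
  (hsupp : forall i : int, N%:Z < `|i| -> a i = 0 /\ b i = 0)
  (ha : exists i, a i != 0) (hb : exists i, b i != 0) :
  (cond1 A N a b <-> cond2 A N a b) /\ (cond2 A N a b <-> cond3 A N a b).
Proof.
have a_supp i : N%:Z < `|i| -> a i = 0 by case/hsupp.
have b_supp i : N%:Z < `|i| -> b i = 0 by case/hsupp.
split.
  exact: iff_trans (cond1E a_supp b_supp A) (iff_sym (cond2E A N a b)).
exact: iff_trans (cond2E A N a b) (iff_sym (cond3E a_supp b_supp A hb)).
Qed.
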